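(* Let $\gamma > 1$ be a real number and let $N$ be an integer with $N > 6$. Let $\alpha^{*}$ denote the smallest strictly positive root of the equation $$1-\cos(\alpha) - \frac{\alpha^2}{2\gamma}=0 .$$ Then for every real $z \in \left[-\frac{\alpha^{*}}{N}, \frac{\alpha^{*}}{N}\right]$ the inequality $$\cos(z) - \frac{\gamma}{N^2}\bigl(\cos(Nz) - 1\bigr) - 1 \geq 0$$ holds.
   Context: $N$ is the number of antennas of a uniform linear array and $\gamma$ plays the role of the allowed array-gain degradation factor (a linear-scale ratio $10^{\gamma_{\mathrm{dB}}/10}$, hence strictly greater than $1$). *)

From Stdlib Require Import Reals.
Open Scope R_scope.

Definition gain_eq (gamma alpha : R) : R :=
  1 - cos alpha - alpha ^ 2 / (2 * gamma).

Definition smallest_pos_root (gamma alpha : R) : Prop :=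
  0 < alpha /\ gain_eq gamma alpha = 0 /\
  (forall a, 0 < a -> gain_eq gamma a = 0 -> alpha <= a).

(** Writing [x = N z], the left-hand side splits as
    [(cos z - 1 + z^2/2) + (gamma/N^2) * gain_eq gamma x].  The first term is
    nonnegative for every [z].  The second is nonnegative because [gain_eq gamma]
    is even, positive just to the right of [0] (there it behaves like
    [(1 - 1/gamma) x^2/2]) and, by the intermediate value theorem, cannot
    become negative before its first positive root [alpha_star]. *)

From Stdlib Require Import Reals Psatz.
Open Scope R_scope.

Lemma cos_ge_1_sub_sqr_div2 (a : R) : 1 - a ^ 2 / 2 <= cos a.
Proof.
destruct (Rle_lt_dec (a ^ 2) 4) as [Ha | Ha].
- destruct (pre_cos_bound a 0 ltac:(nra) ltac:(nra)) as [Hlow _].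
  unfold cos_approx, cos_term in Hlow; simpl in Hlow; lra.
- pose proof (COS_bound a); lra.
Qed.

Lemma cos_le_taylor4 (a : R) : -2 <= a <= 2 -> cos a <= 1 - a ^ 2 / 2 + a ^ 4 / 24.
Proof.
intros Ha.
destruct (pre_cos_bound a 0 ltac:(lra) ltac:(lra)) as [_ Hup].
unfold cos_approx, cos_term in Hup; simpl in Hup; lra.
Qed.

Lemma gain_eq_opp (gamma a : R) : gain_eq gamma (- a) = gain_eq gamma a.
Proof. unfold gain_eq, Rdiv; rewrite cos_neg; ring. Qed.

Lemma continuity_gain_eq (gamma : R) : continuity (gain_eq gamma).
Proof. unfold gain_eq; reg. Qed.

Lemma gain_eq_gt0_near0 (gamma b : R) :
  1 < gamma -> 0 < b -> b <= 1 - / gamma -> 0 < gain_eq gamma b.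
Proof.
intros Hgamma Hb Hb_small.
assert (Hinv : 0 < / gamma < 1).
{ split; [apply Rinv_0_lt_compat; lra |].
  rewrite <- Rinv_1; apply Rinv_lt_contravar; lra. }
pose proof (cos_le_taylor4 b ltac:(lra)) as Hcos.
assert (Hdiv : b ^ 2 / (2 * gamma) = b ^ 2 / 2 * / gamma) by (field; lra).
(* [gain_eq gamma b >= b^2/2 * ((1 - 1/gamma) - b^2/12)] and [b^2 <= b <= 1 - 1/gamma]. *)
unfold gain_eq; rewrite Hdiv.
assert (Hb2 : b ^ 2 <= 1 - / gamma) by nra.
assert (Hb4 : b ^ 4 <= b ^ 2 * (1 - / gamma)) by nra.
assert (0 < b ^ 2 * (1 - / gamma)) by (apply Rmult_lt_0_compat; [apply pow_lt|]; lra).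
lra.
Qed.

Lemma gain_eq_ge0_below_root (gamma alpha a : R) :
  1 < gamma -> smallest_pos_root gamma alpha -> 0 <= a <= alpha ->
  0 <= gain_eq gamma a.
Proof.
intros Hgamma [_ [_ Hmin]] Ha.
destruct (Req_dec a 0) as [-> | Ha0].
{ unfold gain_eq; rewrite cos_0; lra. }
destruct (Rle_lt_dec 0 (gain_eq gamma a)) as [| Hneg]; [assumption | exfalso].
assert (Hinv : / gamma < 1) by (rewrite <- Rinv_1; apply Rinv_lt_contravar; lra).
set (b := Rmin (a / 2) (1 - / gamma)).
assert (Hb : 0 < b) by (apply Rmin_pos; lra).
assert (Hba : b < a) by (unfold b; pose proof (Rmin_l (a / 2) (1 - / gamma)); lra).
assert (Hgain_b : 0 < gain_eq gamma b)
  by (apply gain_eq_gt0_near0; [lra | lra | apply Rmin_r]).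
destruct (IVT (fun x => - gain_eq gamma x) b a) as [r [Hr Hroot]].
- apply continuity_opp, continuity_gain_eq.
- exact Hba.
- lra.
- lra.
- assert (Halpha_r : alpha <= r) by (apply Hmin; lra).
  assert (r = a) as -> by lra.
  lra.
Qed.

Lemma gain_eq_ge0_abs_le (gamma alpha a : R) :
  1 < gamma -> smallest_pos_root gamma alpha -> Rabs a <= alpha ->
  0 <= gain_eq gamma a.
Proof.
intros Hgamma Halpha Ha.
destruct (Rle_lt_dec 0 a) as [Hpos | Hneg].
- rewrite Rabs_right in Ha by lra.
  apply (gain_eq_ge0_below_root gamma alpha _ Hgamma Halpha); lra.
- rewrite Rabs_left in Ha by lra.
  rewrite <- gain_eq_opp.
  apply (gain_eq_ge0_below_root gamma alpha _ Hgamma Halpha); lra.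
Qed.

Lemma array_gain_decomposition (gamma n z : R) :
  gamma <> 0 -> n <> 0 ->
  cos z - gamma / n ^ 2 * (cos (n * z) - 1) - 1 =
  (cos z - (1 - z ^ 2 / 2)) + gamma / n ^ 2 * gain_eq gamma (n * z).
Proof. intros Hgamma Hn; unfold gain_eq; field; auto. Qed.

Theorem lemma1 (gamma : R) (N : nat) (alpha_star : R)
  (Hgamma : 1 < gamma) (HN : (6 < N)%nat)
  (Halpha : smallest_pos_root gamma alpha_star) :
  forall z : R, - (alpha_star / INR N) <= z <= alpha_star / INR N ->
    cos z - gamma / (INR N ^ 2) * (cos (INR N * z) - 1) - 1 >= 0.
Proof.
intros z Hz.
assert (HNpos : 0 < INR N) by (apply lt_0_INR; lia).
assert (HNz : Rabs (INR N * z) <= alpha_star).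
{ rewrite Rabs_mult, Rabs_right by lra.
  apply Rabs_le in Hz.
  apply (Rmult_le_reg_r (/ INR N)); [apply Rinv_0_lt_compat; lra |].
  replace (INR N * Rabs z * / INR N) with (Rabs z) by (field; lra).
  exact Hz. }
rewrite array_gain_decomposition by lra.
pose proof (cos_ge_1_sub_sqr_div2 z).
pose proof (gain_eq_ge0_abs_le gamma alpha_star (INR N * z) Hgamma Halpha HNz).
assert (0 <= gamma / INR N ^ 2)
  by (apply Rlt_le, Rdiv_lt_0_compat; [lra | apply pow_lt; lra]).
apply Rle_ge; nra.
Qed.
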